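(* Let $\sigma_0,\sigma_\epsilon>0$ with $\sigma_0\neq\sigma_\epsilon$, and $\theta_0\in\mathbb{R}$. Let the prior be $\Theta\sim\mathrm{Laplace}(\theta_0,\sigma_0)$ and the signal $X=\Theta+\epsilon$ with $\epsilon\sim\mathrm{Laplace}(0,\sigma_\epsilon)$ independent of $\Theta$. Put $x_0=x-\theta_0$, $a_0=1/\sigma_0$, $a_\epsilon=1/\sigma_\epsilon$, $x^*=\frac{2a_0}{a_\epsilon^2-a_0^2}$. Then the posterior mean $\theta_1=\mathbb{E}[\Theta\mid X=x]$ is $$\theta_1=\theta_0+\operatorname{sgn}(x_0)\,\frac{a_\epsilon}{a_\epsilon e^{(a_\epsilon-a_0)|x_0|}-a_0}\Bigl((|x_0|-x^* )e^{(a_\epsilon-a_0)|x_0|}+x^*\Bigr).$$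
   Context: $\mathrm{Laplace}(\mu,s)$ has density $t\mapsto\frac{1}{2s}e^{-|t-\mu|/s}$. The posterior mean is $\theta_1=\frac{\int\theta f_\Theta(\theta)l_\epsilon(x-\theta)d\theta}{\int f_\Theta(\theta)l_\epsilon(x-\theta)d\theta}$ with $f_\Theta,l_\epsilon$ the prior and noise densities. *)

From mathcomp Require Import all_boot all_order all_algebra.
From mathcomp Require Import all_classical all_reals all_analysis.
Set Implicit Arguments. Unset Strict Implicit. Unset Printing Implicit Defensive.
Import Order.TTheory GRing.Theory Num.Theory.
Local Open Scope ring_scope.
Local Open Scope classical_set_scope.

Definition laplace_pdf {R : realType} (mu s : R) (t : R) : R :=
  (2 * s)^-1 * expR (- (`|t - mu| / s)).

(* Posterior mean of Theta given X = x, where X = Theta + eps with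
   prior density fTheta and independent noise density leps:
   theta_1 = (int theta fTheta(theta) leps(x-theta) dtheta)
           / (int fTheta(theta) leps(x-theta) dtheta),
   integrals over R w.r.t. Lebesgue measure. *)
Definition posterior_mean {R : realType} (fTheta leps : R -> R) (x : R) : R :=
  Rintegral (@lebesgue_measure R) setT (fun th => th * fTheta th * leps (x - th))
  / Rintegral (@lebesgue_measure R) setT (fun th => fTheta th * leps (x - th)).

(* On each of the three intervals cut out by theta0 and x, the exponent
   -a0 |t - theta0| - ae |x - t| of the product of the two Laplace densities is affine in t,
   so the numerator and the denominator of the posterior mean are sums of integrals of
   (alpha t + beta) exp(l (t - r)). These have an explicit primitive, and on the two
   half-lines the exponential decays, so the (improper) fundamental theorem of calculus
   evaluates them; this gives the formula when theta0 <= x. The posterior mean is unchanged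
   when prior and noise exchange their roles, (theta0, sigma0) <-> (x, sigmae), so the case
   x < theta0 follows from the first one and the identity phi(a, b, d) + phi(b, a, d) = d
   for the offset phi(a0, ae, d) = theta1 - theta0 at x0 = d >= 0. *)

From mathcomp Require Import all_boot all_order all_algebra.
From mathcomp Require Import all_classical all_reals all_analysis.
From mathcomp Require Import measurable_realfun ring lra.
Set Implicit Arguments. Unset Strict Implicit. Unset Printing Implicit Defensive.
Import Order.TTheory GRing.Theory Num.Theory.
Import numFieldNormedType.Exports.
Local Open Scope ring_scope.
Local Open Scope classical_set_scope.

Section exponential_decay.
Context {R : realType}.

Lemma cvgy0_le_inv (h : R -> R) (r K : R) :
  (forall t, r < t -> `|h t| <= K / (t - r)) -> h t @[t --> +oo] --> 0.
Proof.
move=> hK; apply/cvgrPdist_le => e e0; near=> t.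
have tr : r < t by near: t; apply: nbhs_pinfty_gt; exact: num_real.
have tK : r + K / e <= t by near: t; apply: nbhs_pinfty_ge; exact: num_real.
rewrite sub0r normrN (le_trans (hK t tr)) // ler_pdivrMr ?subr_gt0 //.
by rewrite mulrC -ler_pdivrMr //; lra.
Unshelve. all: by end_near.
Qed.

Lemma expRN_le_inv (y : R) : 0 < y -> expR (- y) <= y^-1.
Proof.
move=> y0; rewrite expRN lef_pV2 ?posrE ?expR_gt0 //.
by have := expR_ge1Dx y; lra.
Qed.

Lemma mulr_expRN_le_inv (y : R) : 0 < y -> y * expR (- y) <= 2 / y.
Proof.
move=> y0; have := @expR_ge1Dxn R y 1 (ltW y0).
rewrite (_ : (2`!)%:R = 2 :> R) // expr2 => h.
rewrite expRN ler_pdivlMr ?expR_gt0 // mulrAC ler_pdivrMr //; nra.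
Qed.

End exponential_decay.

Section exp_affine.
Context {R : realType}.

Definition exp_affine (l r al be t : R) := expR (l * (t - r)) * (al * t + be).

Definition exp_affine_prim (l r al be : R) :=
  exp_affine l r (al / l) ((be - al / l) / l).

Lemma exp_affine_ge0 (l r al be t : R) : 0 <= al * t + be ->
  0 <= exp_affine l r al be t.
Proof. by move=> ge0; rewrite mulr_ge0 ?expR_ge0. Qed.

Lemma is_derive_exp_affine (l r al be t : R) :
  is_derive t 1 (exp_affine l r al be) (exp_affine l r (l * al) (l * be + al) t).
Proof. by rewrite /exp_affine; apply: is_derive_eq; rewrite /GRing.scale /=; ring. Qed.

Lemma is_derive_exp_affine_prim (l r al be t : R) : l != 0 ->
  is_derive t 1 (exp_affine_prim l r al be) (exp_affine l r al be t).
Proof.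
move=> l0; apply: is_derive_eq (is_derive_exp_affine _ _ _ _ t) _.
by rewrite /exp_affine; congr (_ * _); field.
Qed.

Lemma exp_affine_continuous (l r al be : R) : continuous (exp_affine l r al be).
Proof.
move=> t; have := is_derive_exp_affine l r al be t => ?.
exact/differentiable_continuous/derivable1_diffP.
Qed.

Lemma exp_affine_primitive (l r al be : R) : l != 0 ->
  [/\ forall t, derivable (exp_affine_prim l r al be) t 1,
      continuous (exp_affine_prim l r al be) &
      (exp_affine_prim l r al be)^`() =1 exp_affine l r al be].
Proof.
move=> l0; have dP t := @is_derive_exp_affine_prim l r al be t l0; split.
- by move=> t; have := dP t.
- by move=> t; have := dP t => ?; exact/differentiable_continuous/derivable1_diffP.
- by move=> t; have := dP t => ?; rewrite derive1E derive_val.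
Qed.

Lemma exp_affine_cvgy (c r al be : R) : 0 < c ->
  exp_affine (- c) r al be t @[t --> +oo] --> 0.
Proof.
move=> c0.
have E0 : (fun t => expR (- c * (t - r))) t @[t --> +oo] --> 0.
  apply: (cvgy0_le_inv (r := r) (K := c^-1)) => t rt.
  by rewrite ger0_norm ?expR_ge0 // mulNr -invfM expRN_le_inv // mulr_gt0 // subr_gt0.
have U0 : (fun t => (t - r) * expR (- c * (t - r))) t @[t --> +oo] --> 0.
  apply: (cvgy0_le_inv (r := r) (K := 2 / c ^+ 2)) => t rt.
  have y0 : 0 < c * (t - r) by rewrite mulr_gt0 // subr_gt0.
  rewrite ger0_norm; last by rewrite mulr_ge0 ?expR_ge0 // subr_ge0 ltW.
  rewrite -(ler_pM2l c0) mulrA.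
  apply: le_trans (_ : 2 / (c * (t - r)) <= _); first by rewrite mulNr mulr_expRN_le_inv.
  suff -> : c * (2 / c ^+ 2 / (t - r)) = 2 / (c * (t - r)) by [].
  by field; rewrite subr_eq0 !gt_eqF.
have -> : exp_affine (- c) r al be = fun t =>
    al * ((t - r) * expR (- c * (t - r))) + (al * r + be) * expR (- c * (t - r)).
  by apply/funext => t; rewrite /exp_affine; ring.
have := cvgD (cvgM (cvg_cst al) U0) (cvgM (cvg_cst (al * r + be)) E0).
by rewrite !mulr0 addr0; apply.
Qed.

End exp_affine.

Section is_integral.
Context {R : realType}.
Notation mu := (@lebesgue_measure R).
Implicit Types (D : set (measurableTypeR R)) (f g : R -> R).

Definition is_integral D f (v : R) :=
  mu.-integrable D (EFin \o f) /\ (\int[mu]_(t in D) (f t)%:E = v%:E)%E.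

Lemma is_integral_ge0 D f v : measurable D -> continuous f ->
  (forall t, D t -> 0 <= f t) -> (\int[mu]_(t in D) (f t)%:E = v%:E)%E ->
  is_integral D f v.
Proof.
move=> mD cf f0 fv; split => //; apply/integrableP; split.
  by apply/measurable_EFinP/measurable_funTS; exact: continuous_measurable_fun.
under eq_integral => t /[!inE] Dt do rewrite /= ger0_norm ?f0 //.
by rewrite fv ltry.
Qed.

Lemma eq_is_integral D f g v : measurable D -> {in D, f =1 g} ->
  is_integral D f v -> is_integral D g v.
Proof.
move=> mD fg [if_ fv]; split.
  by apply: eq_integrable if_ => // t Dt /=; rewrite fg.
by rewrite -fv; apply: eq_integral => t Dt; rewrite fg.
Qed.

Lemma is_integralZ D f v k : measurable D ->
  is_integral D f v -> is_integral D (fun t => k * f t) (k * v).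
Proof.
move=> mD [if_ fv]; split.
  by apply: (eq_integrable mD _ _ _ (integrableZl mD k if_)) => t _ /=; rewrite EFinM.
by under eq_integral do rewrite EFinM; rewrite integralZl // fv EFinM.
Qed.

Lemma is_integralD D f g v w : measurable D ->
  is_integral D f v -> is_integral D g w ->
  is_integral D (fun t => f t + g t) (v + w).
Proof.
move=> mD [if_ fv] [ig gw]; split.
  by apply: (eq_integrable mD _ _ _ (integrableD mD if_ ig)) => t _ /=; rewrite EFinD.
by under eq_integral do rewrite EFinD; rewrite integralD // fv gw EFinD.
Qed.

Lemma Rintegral_itv_split3 f (m M vL vM vR : R) : m <= M -> continuous f ->
  is_integral `]-oo, m] f vL -> is_integral `[m, M] f vM ->
  is_integral `[M, +oo[ f vR ->
  \int[mu]_t f t = vL + vM + vR.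
Proof.
move=> mM cf [_ fL] [_ fM] [_ fR].
have mf : measurable_fun setT (EFin \o f).
  by apply/measurable_EFinP; exact: continuous_measurable_fun.
rewrite /Rintegral -(itv_setU_setT false M) integral_setU //; last 2 first.
- by rewrite itv_setU_setT.
- exact: disjoint_rays.
rewrite (@itv_bndbnd_setU _ _ _ (BRight m)) ?bnd_simp // integral_setU //; last 2 first.
- exact: measurable_funTS.
- apply/disj_setPS => t [] /=; rewrite !in_itv /= => tm /andP[mt _].
  by move: (lt_le_trans mt tm); rewrite ltxx.
rewrite !integral_itv_obnd_cbnd; try exact: measurable_funTS.
by rewrite fL fM fR.
Qed.

End is_integral.

Section exp_affine_integrals.
Context {R : realType}.
Notation mu := (@lebesgue_measure R).

Lemma is_integral_exp_affine_itv (l r al be a b : R) : l != 0 -> a <= b ->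
  is_integral `[a, b] (exp_affine l r al be)
    (exp_affine_prim l r al be b - exp_affine_prim l r al be a).
Proof.
move=> l0 ab; have [dP cP eP] := exp_affine_primitive r al be l0.
have cF : {within `[a, b], continuous exp_affine l r al be}.
  exact/continuous_subspaceT/exp_affine_continuous.
split; first by apply: continuous_compact_integrable => //; exact: segment_compact.
move: ab; rewrite le_eqVlt => /predU1P[<-|ab].
  by rewrite set_itv1 integral_set1 subrr.
rewrite (continuous_FTC2 (F := exp_affine_prim l r al be) ab cF) ?EFinB //.
split; first by move=> t _; exact: dP.
- exact/cvg_at_right_filter/cP.
- exact/cvg_at_left_filter/cP.
Qed.

Lemma integral_exp_affine_itvy_ge0 (c r al be a : R) : 0 < c ->
  (forall t, a <= t -> 0 <= al * t + be) ->
  (\int[mu]_(t in `[a, +oo[) (exp_affine (- c) r al be t)%:E =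
     (- exp_affine_prim (- c) r al be a)%:E)%E.
Proof.
move=> c0 ge0; have cN0 : - c != 0 by rewrite oppr_eq0 gt_eqF.
have [dP cP eP] := exp_affine_primitive r al be cN0.
rewrite (ge0_continuous_FTC2y (F := exp_affine_prim (- c) r al be) _ _
  (exp_affine_cvgy r _ _ c0)).
- by rewrite -EFinB sub0r.
- by move=> t /ge0 /exp_affine_ge0.
- exact/continuous_subspaceT/exp_affine_continuous.
- by move=> t _; exact: dP.
- exact/cvg_at_right_filter/cP.
- by move=> t _; exact: eP.
Qed.

Lemma integral_exp_affine_itvNy_ge0 (c r al be a : R) : 0 < c ->
  (forall t, t <= a -> 0 <= al * t + be) ->
  (\int[mu]_(t in `]-oo, a]) (exp_affine c r al be t)%:E =
     (exp_affine_prim c r al be a)%:E)%E.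
Proof.
move=> c0 ge0.
have := @ge0_integration_by_substitutionNy R (exp_affine c r al be) (- a).
rewrite opprK => -> //; last 2 first.
- exact/continuous_subspaceT/exp_affine_continuous.
- by move=> t; rewrite in_itv /= => /ltW /ge0 /exp_affine_ge0.
have reflect t : exp_affine c r al be (- t) = exp_affine (- c) (- r) (- al) be t.
  by rewrite /exp_affine; congr (expR _ * _); ring.
under eq_integral do rewrite /= reflect.
rewrite integral_exp_affine_itvy_ge0 //; last by move=> t ?; rewrite mulNr -mulrN ge0 // lerNl.
congr EFin; rewrite /exp_affine_prim /exp_affine.
rewrite (_ : - c * (- a - - r) = c * (a - r)); last by ring.
by field; rewrite gt_eqF.
Qed.

(* The half-line theorems above need a nonnegative affine factor; on a half-line with
   endpoint c the factors e (t - c) (for a suitable sign e) and 1 are nonnegative and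
   span all affine functions. *)
Lemma is_integral_exp_affine_span (D : set (measurableTypeR R))
    (l r e c al be v1 v0 : R) : measurable D -> e != 0 ->
  is_integral D (exp_affine l r e (- (e * c))) v1 ->
  is_integral D (exp_affine l r 0 1) v0 ->
  is_integral D (exp_affine l r al be) (al / e * v1 + (al * c + be) * v0).
Proof.
move=> mD e0 I1 I0.
apply: eq_is_integral (is_integralD mD (is_integralZ (al / e) mD I1)
                                       (is_integralZ (al * c + be) mD I0)) => //.
by move=> t _; rewrite /exp_affine; field.
Qed.

Lemma is_integral_exp_affine_itvy (c r al be a : R) : 0 < c ->
  is_integral `[a, +oo[ (exp_affine (- c) r al be) (- exp_affine_prim (- c) r al be a).
Proof.
move=> c0.
have Ige0 e0 be0 : (forall t, a <= t -> 0 <= e0 * t + be0) ->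
    is_integral `[a, +oo[ (exp_affine (- c) r e0 be0) (- exp_affine_prim (- c) r e0 be0 a).
  move=> ge0; apply: is_integral_ge0 => //; first exact: exp_affine_continuous.
    by move=> t /=; rewrite in_itv /= andbT => /ge0 /exp_affine_ge0.
  exact: integral_exp_affine_itvy_ge0.
rewrite (_ : - exp_affine_prim (- c) r al be a =
    al / 1 * (- exp_affine_prim (- c) r 1 (- (1 * a)) a)
    + (al * a + be) * (- exp_affine_prim (- c) r 0 1 a)).
  by apply: is_integral_exp_affine_span; rewrite ?oner_neq0 //; apply: Ige0 => t; lra.
by rewrite /exp_affine_prim /exp_affine; field; rewrite gt_eqF.
Qed.

Lemma is_integral_exp_affine_itvNy (c r al be a : R) : 0 < c ->
  is_integral `]-oo, a] (exp_affine c r al be) (exp_affine_prim c r al be a).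
Proof.
move=> c0.
have Ige0 e0 be0 : (forall t, t <= a -> 0 <= e0 * t + be0) ->
    is_integral `]-oo, a] (exp_affine c r e0 be0) (exp_affine_prim c r e0 be0 a).
  move=> ge0; apply: is_integral_ge0 => //; first exact: exp_affine_continuous.
    by move=> t /=; rewrite in_itv /= => /ge0 /exp_affine_ge0.
  exact: integral_exp_affine_itvNy_ge0.
rewrite (_ : exp_affine_prim c r al be a =
    al / -1 * exp_affine_prim c r (-1) (- (-1 * a)) a
    + (al * a + be) * exp_affine_prim c r 0 1 a).
  by apply: is_integral_exp_affine_span; rewrite ?oppr_eq0 ?oner_neq0 //; apply: Ige0 => t; lra.
by rewrite /exp_affine_prim /exp_affine; field; rewrite gt_eqF.
Qed.

Lemma is_integral_expR_piece (D : set (measurableTypeR R)) (u : R -> R)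
    (l r C k v0 v1 : R) : measurable D ->
  {in D, forall t, u t = C + l * (t - r)} ->
  is_integral D (exp_affine l r 0 1) v0 -> is_integral D (exp_affine l r 1 0) v1 ->
  is_integral D (fun t => k * expR (u t)) (k * expR C * v0) /\
  is_integral D (fun t => t * (k * expR (u t))) (k * expR C * v1).
Proof.
move=> mD uE I0 I1.
split; [move: I0|move: I1] => /(is_integralZ (k * expR C) mD);
  by apply: eq_is_integral => // t Dt; rewrite uE // /exp_affine expRD; ring.
Qed.

End exp_affine_integrals.

Section laplace_posterior.
Context {R : realType}.
Notation mu := (@lebesgue_measure R).

(* The paper's theta_1 - theta_0 when x_0 = d >= 0, for the rates a = a_0 and b = a_eps. *)
Definition posterior_offset (a b d : R) : R :=
  let xs := 2 * a / (b ^+ 2 - a ^+ 2) in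
  b / (b * expR ((b - a) * d) - a) * ((d - xs) * expR ((b - a) * d) + xs).

Lemma posterior_offset0 (a b : R) : posterior_offset a b 0 = 0.
Proof. by rewrite /posterior_offset /= mulr0 expR0 !mulr1 sub0r addNr mulr0. Qed.

Lemma posterior_offset_den_neq0 (a b d : R) : 0 < a -> 0 < b -> a != b -> 0 <= d ->
  b * expR ((b - a) * d) - a != 0.
Proof.
move=> a0 b0 ab d0; rewrite subr_eq0; case: ltrgtP ab => // ab _.
- rewrite gt_eqF // (lt_le_trans ab) // ler_peMr ?(ltW b0) //.
  by rewrite -expR0 ler_expR mulr_ge0 // subr_ge0 ltW.
- rewrite lt_eqF // (le_lt_trans _ ab) // ler_piMr ?(ltW b0) //.
  by rewrite -expR0 ler_expR mulr_le0_ge0 // subr_le0 ltW.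
Qed.

Lemma posterior_offsetC (a b d : R) : 0 < a -> 0 < b -> a != b -> 0 <= d ->
  posterior_offset a b d + posterior_offset b a d = d.
Proof.
move=> a0 b0 ab d0; have := posterior_offset_den_neq0 a0 b0 ab d0.
rewrite /posterior_offset /= (_ : (a - b) * d = - ((b - a) * d)); last by ring.
rewrite expRN; set E := expR _ => den0.
have E0 : E != 0 by rewrite gt_eqF ?expR_gt0.
have sq : b ^+ 2 - a ^+ 2 != 0 by rewrite subr_eq0 eqrXn2 ?ltW // eq_sym.
have sq' : a ^+ 2 - b ^+ 2 != 0 by rewrite subr_eq0 eqrXn2 ?ltW.
by field; rewrite sq sq' E0 den0 /= mulNr -opprB oppr_eq0 den0.
Qed.

Lemma laplace_exponent_itv (a b p q : R) : p <= q ->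
  let u t := - (a * `|t - p|) - b * `|q - t| in
  [/\ {in `]-oo, p], forall t, u t = - (b * (q - p)) + (a + b) * (t - p)},
      {in `[p, q], forall t, u t = - (b * (q - p)) + (b - a) * (t - p)} &
      {in `[q, +oo[, forall t, u t = - (a * (q - p)) + - (a + b) * (t - q)}].
Proof.
move=> pq u; split => t; rewrite inE /= in_itv /= ?andbT.
- move=> tp; rewrite /u ler0_norm ?subr_le0 //.
  by rewrite ger0_norm ?subr_ge0 ?(le_trans tp) //; ring.
- by move=> /andP[pt tq]; rewrite /u !ger0_norm ?subr_ge0 //; ring.
- move=> qt; rewrite /u (ger0_norm (x := t - p)) ?subr_ge0 ?(le_trans pq) //.
  by rewrite ler0_norm ?subr_le0 //; ring.
Qed.

Lemma laplace_weight_continuous (k a b p q : R) :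
  continuous (fun t => k * expR (- (a * `|t - p|) - b * `|q - t|)).
Proof.
move=> t; apply: cvgM; first exact: cvg_cst.
apply: continuous_comp; last exact: continuous_expR.
apply: cvgB; [apply: cvgN|]; apply: cvgM; try exact: cvg_cst;
  apply: cvg_norm; apply: cvgB; try exact: cvg_cst; exact: cvg_id.
Qed.

Lemma laplace_weight_mean (k a b p q : R) :
  k != 0 -> 0 < a -> 0 < b -> a != b -> p <= q ->
  let w t := k * expR (- (a * `|t - p|) - b * `|q - t|) in
  \int[mu]_t (t * w t) / \int[mu]_t w t = p + posterior_offset a b (q - p).
Proof.
move=> k0 a0 b0 ab pq w; have [uL uM uR] := laplace_exponent_itv a b pq.
have s0 : 0 < a + b by rewrite addr_gt0.
have g0 : b - a != 0 by rewrite subr_eq0 eq_sym.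
have [IL tIL] := is_integral_expR_piece k (measurable_itv _) uL
  (is_integral_exp_affine_itvNy p 0 1 p s0) (is_integral_exp_affine_itvNy p 1 0 p s0).
have [IM tIM] := is_integral_expR_piece k (measurable_itv _) uM
  (is_integral_exp_affine_itv p 0 1 g0 pq) (is_integral_exp_affine_itv p 1 0 g0 pq).
have [IR tIR] := is_integral_expR_piece k (measurable_itv _) uR
  (is_integral_exp_affine_itvy q 0 1 q s0) (is_integral_exp_affine_itvy q 1 0 q s0).
have cw : continuous w by exact: laplace_weight_continuous.
have ctw : continuous (fun t : R => t * w t).
  by move=> t; apply: cvgM; [exact: cvg_id|exact: cw].
rewrite (Rintegral_itv_split3 pq cw IL IM IR) (Rintegral_itv_split3 pq ctw tIL tIM tIR).
rewrite /exp_affine_prim /exp_affine !subrr !mulr0 expR0.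
rewrite (_ : - (a * (q - p)) = (b - a) * (q - p) + - (b * (q - p))); last by ring.
have d0 : 0 <= q - p by rewrite subr_ge0.
have den0 := posterior_offset_den_neq0 a0 b0 ab d0.
rewrite /posterior_offset /= expRD; set E := expR (_ * _); set B := expR (- _).
have B0 : B != 0 by rewrite gt_eqF ?expR_gt0.
have sq : b ^+ 2 - a ^+ 2 != 0 by rewrite subr_eq0 eqrXn2 ?ltW // eq_sym.
field; rewrite sq den0 gt_eqF // g0 /=.
rewrite [X in X != 0](_ : _ = - (a + b) * k * B * 2 * (b * E - a)); last by ring.
by rewrite !mulf_neq0 ?pnatr_eq0 // oppr_eq0 gt_eqF.
Qed.

Lemma laplace_pdf_mul (p q sa sb t : R) :
  laplace_pdf p sa t * laplace_pdf 0 sb (q - t) =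
  (2 * sa)^-1 * (2 * sb)^-1 * expR (- (sa^-1 * `|t - p|) - sb^-1 * `|q - t|).
Proof.
by rewrite /laplace_pdf subr0 expRD (mulrC sa^-1) (mulrC sb^-1); ring.
Qed.

Lemma posterior_mean_laplaceC (p q sa sb : R) :
  posterior_mean (laplace_pdf p sa) (laplace_pdf 0 sb) q =
  posterior_mean (laplace_pdf q sb) (laplace_pdf 0 sa) p.
Proof.
rewrite /posterior_mean; congr (_ / _); apply: eq_Rintegral => t _;
  by rewrite -?(mulrA t) !laplace_pdf_mul (distrC t q) (distrC p t) !expRD; ring.
Qed.

Lemma posterior_mean_laplace_le (p q sa sb : R) :
  0 < sa -> 0 < sb -> sa != sb -> p <= q ->
  posterior_mean (laplace_pdf p sa) (laplace_pdf 0 sb) q =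
  p + posterior_offset sa^-1 sb^-1 (q - p).
Proof.
move=> sa0 sb0 sab pq.
have k0 : (2 * sa)^-1 * (2 * sb)^-1 != 0.
  by rewrite mulf_neq0 // invr_eq0 mulf_neq0 ?pnatr_eq0 ?gt_eqF.
rewrite -(laplace_weight_mean k0 _ _ _ pq) ?invr_gt0 ?(inj_eq invr_inj) //.
rewrite /posterior_mean; congr (_ / _); apply: eq_Rintegral => t _;
  by rewrite -?(mulrA t) laplace_pdf_mul.
Qed.

Lemma posterior_mean_laplace_ge (p q sa sb : R) :
  0 < sa -> 0 < sb -> sa != sb -> q <= p ->
  posterior_mean (laplace_pdf p sa) (laplace_pdf 0 sb) q =
  p - posterior_offset sa^-1 sb^-1 (p - q).
Proof.
move=> sa0 sb0 sab qp.
have a0 : 0 < sa^-1 by rewrite invr_gt0.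
have b0 : 0 < sb^-1 by rewrite invr_gt0.
have ab : sa^-1 != sb^-1 by rewrite (inj_eq invr_inj).
have d0 : 0 <= p - q by rewrite subr_ge0.
have := posterior_offsetC a0 b0 ab d0.
by rewrite posterior_mean_laplaceC posterior_mean_laplace_le 1?eq_sym //; lra.
Qed.

End laplace_posterior.

Theorem mainTheorem11 (R : realType) (sigma0 sigmae theta0 x : R) :
  0 < sigma0 -> 0 < sigmae -> sigma0 != sigmae ->
  let x0 := x - theta0 in
  let a0 := sigma0^-1 in
  let ae := sigmae^-1 in
  let xs := 2 * a0 / (ae ^+ 2 - a0 ^+ 2) in
  posterior_mean (laplace_pdf theta0 sigma0) (laplace_pdf 0 sigmae) x =
    theta0 + Num.sg x0 * (ae / (ae * expR ((ae - a0) * `|x0|) - a0)) *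
      ((`|x0| - xs) * expR ((ae - a0) * `|x0|) + xs).
Proof.
move=> s0 se sne x0 a0 ae xs; rewrite -mulrA.
change (posterior_mean (laplace_pdf theta0 sigma0) (laplace_pdf 0 sigmae) x =
  theta0 + Num.sg x0 * posterior_offset a0 ae `|x0|).
rewrite {}/xs {}/x0 {}/a0 {}/ae.
case: (ltrgtP x theta0) => [xlt|xgt|<-].
- by rewrite posterior_mean_laplace_ge ?ltW // ltr0_sg ?subr_lt0 // mulN1r.
- by rewrite posterior_mean_laplace_le ?ltW // gtr0_sg ?subr_gt0 // mul1r.
- by rewrite posterior_mean_laplace_le // subrr posterior_offset0 sgr0 mul0r.
Qed.
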